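(* Let $X$ be an almost surely positive random variable with finite mean $\mathbb{E}(X)$ and cumulative distribution function $F$, and let $X_1, X_2$ be two independent copies of $X$. Let $g$ be a positive real-valued integrable function of two positive variables which is symmetric, i.e. $g(u,v)=g(v,u)$ for all $u,v>0$. Let $X^*$ be a random variable independent of $X$ with cumulative distribution function $F_{X^*}(u)=\frac{1}{\mathbb{E}(X)}\int_0^u t\,{\rm d}F(t)$, $u>0$. Then $$\mathbb{E}[|X_1-X_2|\,g(X_1,X_2)] = 2\mathbb{E}(X)\Big\{2\mathbb{E}\big[g(X^*,X)\mathds{1}_{\{X<X^*\}}\big]-\mathbb{E}\big[g(X^*,X)\big]+\mathbb{E}\big[g(X^*,X)\mathds{1}_{\{X=X^*\}}\big]\Big\},$$ where $\mathds{1}_A$ denotes the indicator function of the event $A$. *)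

From HB Require Import structures.
From mathcomp Require Import all_boot all_order all_algebra.
From mathcomp Require Import all_classical all_reals all_analysis.
Set Implicit Arguments. Unset Strict Implicit. Unset Printing Implicit Defensive.
Import Order.TTheory GRing.Theory Num.Theory.
Local Open Scope classical_set_scope.
Local Open Scope ring_scope.

Definition indep2 {d} {T : measurableType d} {R : realType}
  (P : probability T R) (Y Z : T -> R) : Prop :=
  forall A B : set R, measurable A -> measurable B ->
    P (Y @^-1` A `&` Z @^-1` B) = (P (Y @^-1` A) * P (Z @^-1` B))%E.

Definition same_law {d} {T : measurableType d} {R : realType}
  (P : probability T R) (Y Z : T -> R) : Prop :=
  forall A : set R, measurable A -> P (Y @^-1` A) = P (Z @^-1` A).

From HB Require Import structures.
From mathcomp Require Import all_boot all_order all_algebra.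
From mathcomp Require Import all_classical all_reals all_analysis.
From mathcomp Require Import measurable_realfun ring.
Import Order.TTheory GRing.Theory Num.Theory.
Local Open Scope classical_set_scope.
Local Open Scope ring_scope.
Local Open Scope ereal_scope.

(* Let mu be the law of X.  The law of X* agrees with the measure of density
   x 1_{x > 0} / E(X) with respect to mu on every ray ]-oo, u], hence on all
   Borel sets, so every expectation in the statement becomes an integral
   against mu (x) mu, restricted to the open positive quadrant where g is
   nonnegative and symmetric.  Swapping the coordinates of mu (x) mu gives
     E|X1 - X2| g(X1, X2)
       = 2 E(X) (E[g(X*, X) 1_{X < X*}] - E[g(X*, X) 1_{X* < X}])
   because |x - y| + min(x, y) = max(x, y), and splitting E[g(X*, X)] along
   the three cases X < X*, X* < X, X = X* yields the formula. *)

Lemma measurable_natr_bool {d} {T : measurableType d} {R : realType} (b : T -> bool) :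
  measurable_fun setT b -> measurable_fun setT (fun x => ((b x)%:R : R)).
Proof.
by move=> mb; apply: (@measurableT_comp _ _ _ _ _ _ (fun b : bool => (b%:R : R))).
Qed.

Lemma ge0_integralD_EFin {d} {T : measurableType d} {R : realType}
    (mu : {measure set T -> \bar R}) (f1 f2 : T -> R) :
    measurable_fun setT f1 -> measurable_fun setT f2 ->
    (forall x, 0 <= f1 x)%R -> (forall x, 0 <= f2 x)%R ->
  \int[mu]_x (f1 x + f2 x)%:E = \int[mu]_x (f1 x)%:E + \int[mu]_x (f2 x)%:E.
Proof.
move=> mf1 mf2 f10 f20.
have mf1E : measurable_fun setT (fun x => (f1 x)%:E) by exact/measurable_EFinP.
have mf2E : measurable_fun setT (fun x => (f2 x)%:E) by exact/measurable_EFinP.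
under eq_integral do rewrite EFinD.
by apply: ge0_integralD => // x _; rewrite lee_fin ?f10 ?f20.
Qed.

Lemma measure_eq_rays {R : realType} (m1 m2 : {measure set R -> \bar R}) :
    (forall u, m1 `]-oo, u]%classic < +oo) ->
    (forall u, m1 `]-oo, u]%classic = m2 `]-oo, u]%classic) ->
  forall A, measurable A -> m1 A = m2 A.
Proof.
move=> m1oo m12.
have m2oo u : m2 `]-oo, u]%classic < +oo by rewrite -m12.
apply: (measure_unique (@ocitv R) (fun k : nat => `](- k%:R)%R, k%:R]%classic)) => //.
- exact: ocitvI.
- by move=> k; exact: is_ocitv.
- apply/seteqP; split=> // x _; exists (Num.truncn `|x|).+1 => //=.
  rewrite in_itv /=; apply/andP; split.
    by rewrite ltrNl (le_lt_trans (ler_norm (- x))) // normrN truncnS_gt.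
  by rewrite ltW // (le_lt_trans (ler_norm x)) // truncnS_gt.
- move=> _ [[a b] _ <-] /=; have [ab|ba] := leP a b; last first.
    by rewrite set_itv_ge ?measure0 // bnd_simp -leNgt ltW.
  have -> : `]a, b]%classic = `]-oo, b] `\` `]-oo, a].
    by rewrite -[RHS]setCK setCD setCitvl setUC -[LHS]setCK setCitv.
  have sab : `]-oo, a] `<=` `]-oo, b]%classic by apply: subset_itvl.
  by rewrite !measureD ?setIidr ?m1oo ?m2oo //; congr (_ - _); apply: m12.
- move=> k; apply: le_lt_trans (m1oo k%:R).
  by apply: le_measure; rewrite ?inE //; apply: subset_itvr; rewrite bnd_simp.
Qed.

Lemma integral_density {d} {T : measurableType d} {R : realType}
    (mu : {sigma_finite_measure set T -> \bar R})
    (nu : {finite_measure set T -> \bar R}) (f : T -> R) :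
    measurable_fun setT f ->
    (forall A, measurable A -> nu A = \int[mu]_(x in A) (f x)%:E) ->
  forall h : T -> \bar R, measurable_fun setT h -> (forall x, 0 <= h x) ->
  \int[nu]_x h x = \int[mu]_x (h x * (f x)%:E).
Proof.
move=> mf nuE h mh h0.
have nu_mu : nu `<< mu.
  apply/null_content_dominatesP => A mA muA0; rewrite nuE //.
  by apply: null_set_integral => //; exact/measurable_funTS/measurable_EFinP.
(* f and the Radon-Nikodym derivative of nu have the same integral on every
   measurable set, hence agree mu-almost everywhere. *)
have intRN := Radon_Nikodym_SigmaFinite.f_integrable nu_mu.
rewrite -(Radon_Nikodym_SigmaFinite.change_of_variables nu_mu) //.
apply: ae_eq_integral => //.
- exact/emeasurable_funM/(measurable_int _ intRN).
- exact/emeasurable_funM/measurable_EFinP.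
apply: ae_eqe_mul2l; apply: integral_ae_eq => //; first exact/measurable_EFinP.
by move=> A _ mA; rewrite -nuE // -Radon_Nikodym_SigmaFinite.f_integral.
Qed.

Section product_integrals.
Context {d1 d2} {T1 : measurableType d1} {T2 : measurableType d2} {R : realType}.

Lemma integral_prod_swap (m1 : {sigma_finite_measure set T1 -> \bar R})
    (m2 : {sigma_finite_measure set T2 -> \bar R}) (F : T1 * T2 -> \bar R) :
    measurable_fun setT F -> (forall z, 0 <= F z) ->
  \int[m1 \x m2]_z F z = \int[m2 \x m1]_z F (z.2, z.1).
Proof.
move=> mF F0; rewrite fubini_tonelli1 // fubini_tonelli2 //.
by apply: measurableT_comp => //; exact: measurable_swap.
Qed.

Lemma integral_prod_density (mu nu : {sigma_finite_measure set T1 -> \bar R})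
    (m : {sigma_finite_measure set T2 -> \bar R}) (f : T1 -> R) :
    (forall x, (0 <= f x)%R) -> measurable_fun setT f ->
    (forall h, measurable_fun setT h -> (forall x, 0 <= h x) ->
       \int[nu]_x h x = \int[mu]_x (h x * (f x)%:E)) ->
  forall F : T1 * T2 -> R, measurable_fun setT F -> (forall z, (0 <= F z)%R) ->
  \int[nu \x m]_z (F z)%:E = \int[mu \x m]_z (f z.1 * F z)%:E.
Proof.
move=> f0 mf nuE F mF F0.
have mFE : measurable_fun setT (fun z => (F z)%:E) by exact/measurable_EFinP.
have FE0 z : 0 <= (F z)%:E by rewrite lee_fin.
have mfFE : measurable_fun setT (fun z : T1 * T2 => (f z.1 * F z)%:E).
  by apply/measurable_EFinP; apply: measurable_funM => //; exact: measurableT_comp.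
have fFE0 z : 0 <= (f z.1 * F z)%:E by rewrite lee_fin mulr_ge0.
rewrite fubini_tonelli1 // fubini_tonelli1 // nuE //.
- apply: eq_integral => x _; rewrite /fubini_F muleC -ge0_integralZl_EFin //.
  by apply/measurable_EFinP; apply: measurableT_comp => //; exact: pair1_measurable.
- exact: measurable_fun_fubini_tonelli_F.
- by move=> x; exact: integral_ge0.
Qed.

End product_integrals.

Lemma integral_prod_add_swap {d} {T : measurableType d} {R : realType}
    (m : {sigma_finite_measure set T -> \bar R}) (F : T * T -> R) :
    measurable_fun setT F -> (forall z, (0 <= F z)%R) ->
  \int[m \x m]_z (F z + F (z.2, z.1))%:E = 2%:E * \int[m \x m]_z (F z)%:E.
Proof.
move=> mF F0; rewrite ge0_integralD_EFin //; last first.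
  by apply: measurableT_comp => //; exact: measurable_swap.
rewrite -(integral_prod_swap m m (fun z => (F z)%:E)) ?mule_natl ?mule2n //.
exact/measurable_EFinP.
Qed.

Section positive_random_variable.
Context {d} {T : measurableType d} {R : realType} {P : probability T R}.
Context {Y : {RV P >-> R}}.

Lemma RV_le0_null : P [set w | 0 < Y w]%R = 1 -> P (Y @^-1` `]-oo, 0%R]) = 0.
Proof.
move=> Ypos.
have -> : Y @^-1` `]-oo, 0%R] = ~` [set w | 0 < Y w]%R.
  by rewrite predeqE => w /=; rewrite in_itv /= leNgt; split => /negP.
rewrite probability_setC ?Ypos ?subee //.
rewrite (_ : [set w | _] = Y @^-1` `]0%R, +oo[); first exact: measurable_funPTI.
by rewrite predeqE => w /=; rewrite in_itv /= andbT.
Qed.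

Lemma RV_gt0_ae : P (Y @^-1` `]-oo, 0%R]) = 0 -> {ae P, forall w, 0 < Y w}%R.
Proof.
move=> Y0; exists (Y @^-1` `]-oo, 0%R]); split => //; first exact: measurable_funPTI.
by move=> w /= /negP; rewrite -leNgt in_itv.
Qed.

Lemma expectation_ge0_ae : {ae P, forall w, 0 <= Y w}%R -> 0 <= 'E_P[Y].
Proof.
move=> Y0; rewrite expectation.unlock.
rewrite (ae_eq_integral (fun w => (Num.max (Y w) 0%R)%:E)) //.
- by apply: integral_ge0 => w _; rewrite lee_fin le_max lexx orbT.
- exact/measurable_EFinP.
- by apply/measurable_EFinP; apply: measurable_maxr.
by apply: filterS Y0 => w Yw _; rewrite max_l.
Qed.

End positive_random_variable.

Definition indic_pos2 {R : realType} (z : R * R) : R :=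
  ((0 < z.1) && (0 < z.2))%R%:R.

Lemma indic_pos2_mul_ge0 {R : realType} (k : R -> R -> R) :
    (forall x y, 0 < x -> 0 < y -> 0 <= k x y)%R ->
  forall z : R * R, (0 <= k z.1 z.2 * indic_pos2 z)%R.
Proof.
move=> k0 [x y]; rewrite /indic_pos2 /=.
by case: (ltP 0%R x) => x0; case: (ltP 0%R y) => y0; rewrite /= ?mulr0 ?mulr1 ?k0.
Qed.

Lemma measurable_indic_pos2_mul {R : realType} (k : R * R -> R) :
  measurable_fun setT k -> measurable_fun setT (fun z => k z * indic_pos2 z)%R.
Proof.
move=> mk; apply: measurable_funM => //; apply: measurable_natr_bool.
by apply: measurable_and; apply: measurable_fun_ltr.
Qed.

Section independent_pair.
Context {d} {T : measurableType d} {R : realType} {P : probability T R}.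
Context {Y Z : {RV P >-> R}} {mY mZ : probability R R}.
Hypotheses (lawY : forall A, measurable A -> P (Y @^-1` A) = mY A)
  (lawZ : forall A, measurable A -> P (Z @^-1` A) = mZ A) (YZ : indep2 P Y Z).

Let YZ_pair (w : T) : R * R := (Y w, Z w).

Let measurable_YZ_pair : measurable_fun setT YZ_pair.
Proof. exact: measurable_fun_pair. Qed.

HB.instance Definition _ :=
  isMeasurableFun.Build _ _ _ _ YZ_pair measurable_YZ_pair.

Lemma integral_indep_pair (F : R * R -> \bar R) :
    measurable_fun setT F -> (forall z, 0 <= F z) ->
  \int[P]_w F (Y w, Z w) = \int[mY \x mZ]_z F z.
Proof.
move=> mF F0.
transitivity (\int[distribution P YZ_pair]_z F z).
  by rewrite ge0_integral_distribution.
apply: eq_measure_integral => A mA _; apply/esym.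
apply: (product_measure_unique (m' := distribution P YZ_pair)) => // B C mB mC.
by rewrite /= -lawY // -lawZ // -YZ.
Qed.

Lemma expectation_indep_pair (e : T -> R) (k : R * R -> R) :
    measurable_fun setT e -> measurable_fun setT k -> (forall z, 0 <= k z)%R ->
    {ae P, forall w, e w = k (Y w, Z w)} ->
  'E_P[e] = \int[mY \x mZ]_z (k z)%:E.
Proof.
move=> me mk k0 ek.
have mkE : measurable_fun setT (fun z => (k z)%:E) by exact/measurable_EFinP.
rewrite expectation.unlock -integral_indep_pair //.
apply: ae_eq_integral => //.
- exact/measurable_EFinP.
- by apply/measurable_EFinP; exact: measurableT_comp mk measurable_YZ_pair.
by apply: filterS ek => w -> _.
Qed.

Lemma expectation_indep_pos_pair (k : R -> R -> R) :
    {ae P, forall w, 0 < Y w}%R -> {ae P, forall w, 0 < Z w}%R ->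
    measurable_fun setT (fun z : R * R => k z.1 z.2) ->
    (forall x y, 0 < x -> 0 < y -> 0 <= k x y)%R ->
  'E_P[fun w => k (Y w) (Z w)] = \int[mY \x mZ]_z (k z.1 z.2 * indic_pos2 z)%:E.
Proof.
move=> Ypos Zpos mk k0; apply: expectation_indep_pair.
- exact: measurableT_comp mk measurable_YZ_pair.
- exact: measurable_indic_pos2_mul.
- exact: indic_pos2_mul_ge0.
by apply: filterS2 Ypos Zpos => w Yw Zw; rewrite /indic_pos2 /= Yw Zw mulr1.
Qed.

End independent_pair.

Section size_biased_law.
Context {R : realType}.

Definition size_bias (c x : R) : R := (c^-1 * (x * (0 < x)%R%:R))%R.

Lemma size_bias_mul (c x : R) : c != 0%R -> (0 < x)%R -> (c * size_bias c x)%R = x.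
Proof. by move=> c0 x0; rewrite /size_bias x0 mulr1 mulrA mulfV // mul1r. Qed.

Lemma truncated_id_ge0 (u x : R) : (0 <= x * ((0 < x) && (x <= u))%R%:R)%R.
Proof. by case: (ltP 0%R x) => x0; rewrite /= ?mulr0 // mulr_ge0 // ltW. Qed.

Lemma measurable_truncated_id (u : R) :
  measurable_fun setT (fun x : R => x * ((0 < x) && (x <= u))%R%:R)%R.
Proof.
apply: measurable_funM => //; apply: measurable_natr_bool.
by apply: measurable_and; [exact: measurable_fun_ltr | exact: measurable_fun_ler].
Qed.

Context {mu nu : probability R R} {c : R}.
Hypothesis c_ge0 : (0 <= c)%R.
Hypothesis nu_cdf : forall u, (0 < u)%R -> nu `]-oo, u]%classic =
  (c^-1)%:E * \int[mu]_x (x * ((0 < x) && (x <= u))%R%:R)%:E.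

Lemma size_bias_ge0 x : (0 <= size_bias c x)%R.
Proof.
by rewrite mulr_ge0 ?invr_ge0 //; case: ltP => [/ltW|_]; rewrite ?mulr1 ?mulr0.
Qed.

Lemma measurable_size_bias : measurable_fun setT (size_bias c).
Proof.
apply: measurable_funM => //; apply: measurable_funM => //.
exact/measurable_natr_bool/measurable_fun_ltr.
Qed.

Lemma size_biased_le0 : nu `]-oo, 0%R]%classic = 0.
Proof.
have nu_le u : (0 < u)%R -> nu `]-oo, 0%R]%classic <= (c^-1 * u)%:E.
  move=> u0; rewrite (@le_trans _ _ (nu `]-oo, u]%classic)) //.
    by apply: le_measure; rewrite ?inE //; apply: subset_itvl; rewrite bnd_simp ltW.
  rewrite nu_cdf // EFinM lee_wpmul2l ?lee_fin ?invr_ge0 //.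
  rewrite -[u%:E]mule1 -(probability_setT mu) -integral_cst //.
  apply: ge0_le_integral => //.
  - by move=> x _ /=; rewrite lee_fin truncated_id_ge0.
  - by apply/measurable_EFinP; exact: measurable_truncated_id.
  - move=> x _; rewrite lee_fin.
    by case: (ltP 0%R x); case: (leP x u); rewrite /= ?mulr1 ?mulr0 ?(ltW u0).
apply/eqP; rewrite eq_le measure_ge0 andbT.
(* when c = 0 the bound is already 0, since 0^-1 = 0 *)
have [c0|c0] := eqVneq c 0%R.
  by have := nu_le 1%R ltr01; rewrite c0 invr0 mul0r.
apply/lee_addgt0Pr => e e0; rewrite add0e.
have := nu_le (e * c)%R; rewrite mulrCA mulVf // mulr1; apply.
by rewrite mulr_gt0 // lt_neqAle eq_sym c0.
Qed.

Let size_biased_measure (A : set R) := \int[mu]_(x in A) (size_bias c x)%:E.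

Let size_biased_measure0 : size_biased_measure set0 = 0.
Proof. exact: integral_set0. Qed.

Let size_biased_measure_ge0 A : 0 <= size_biased_measure A.
Proof. by apply: integral_ge0 => x _; rewrite lee_fin size_bias_ge0. Qed.

Let size_biased_measure_sigma_additive : semi_sigma_additive size_biased_measure.
Proof.
apply: semi_sigma_additive_nng_induced.
  by apply/measurable_EFinP; exact: measurable_size_bias.
by move=> x; rewrite lee_fin size_bias_ge0.
Qed.

HB.instance Definition _ := isMeasure.Build _ _ _ size_biased_measure
  size_biased_measure0 size_biased_measure_ge0 size_biased_measure_sigma_additive.

Let nu_ray u : nu `]-oo, u]%classic = size_biased_measure `]-oo, u]%classic.
Proof.
have [u0|u0] := ltP 0%R u.
  rewrite nu_cdf // /size_biased_measure [RHS]integral_mkcond.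
  rewrite -ge0_integralZl_EFin ?invr_ge0 //; last 2 first.
  - by move=> x _ /=; rewrite lee_fin truncated_id_ge0.
  - by apply/measurable_EFinP; exact: measurable_truncated_id.
  apply: eq_integral => x _; rewrite patchE -EFinM /size_bias.
  case: ifPn => [/set_mem /= xu | xu].
    by rewrite in_itv /= in xu; rewrite xu andbT.
  have -> : (x <= u)%R = false.
    by apply: contraNF xu => xu; apply/mem_set; rewrite /= in_itv.
  by rewrite andbF !mulr0.
have -> : size_biased_measure `]-oo, u]%classic = 0.
  apply: integral0_eq => x /=; rewrite in_itv /= => xu.
  by rewrite /size_bias ltNge (le_trans xu u0) mulr0 mulr0.
apply/eqP; rewrite eq_le measure_ge0 andbT -size_biased_le0.
by apply: le_measure; rewrite ?inE //; apply: subset_itvl; rewrite bnd_simp.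
Qed.

Lemma size_biased_density A :
  measurable A -> nu A = \int[mu]_(x in A) (size_bias c x)%:E.
Proof.
apply: (@measure_eq_rays _ nu size_biased_measure) => // u.
by rewrite (le_lt_trans (probability_le1 _ _)) ?ltry.
Qed.

Lemma size_biased_scale_neq0 : c != 0%R.
Proof.
apply/eqP => c0; have := probability_setT nu.
rewrite size_biased_density // integral0_eq => [/eqP|x _].
  by rewrite eq_sym onee_eq0.
by rewrite /size_bias c0 invr0 mul0r.
Qed.

Lemma size_biased_integral (h : R -> \bar R) :
    measurable_fun setT h -> (forall x, 0 <= h x) ->
  \int[nu]_x h x = \int[mu]_x (h x * (size_bias c x)%:E).
Proof.
apply: integral_density; first exact: measurable_size_bias.
exact: size_biased_density.
Qed.

End size_biased_law.

Section size_biased_pair.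
Context {d} {T : measurableType d} {R : realType} {P : probability T R}.
Context {X Xs : {RV P >-> R}} {c : R}.
Hypotheses (c_ge0 : (0 <= c)%R) (XsX : indep2 P Xs X).
Hypothesis X_gt0 : {ae P, forall w, 0 < X w}%R.
Hypothesis Xs_cdf : forall u, (0 < u)%R -> P (Xs @^-1` `]-oo, u]) =
  (c^-1)%:E * 'E_P[fun w => (X w * ((0 < X w) && (X w <= u))%:R)%R].

Let mu := distribution P X.
Let nu := distribution P Xs.

Let nu_cdf u : (0 < u)%R -> nu `]-oo, u]%classic =
  (c^-1)%:E * \int[mu]_x (x * ((0 < x) && (x <= u))%R%:R)%:E.
Proof.
move=> u0; rewrite /nu /distribution /pushforward Xs_cdf //; congr (_ * _).
rewrite expectation.unlock ge0_integral_distribution //.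
  by apply/measurable_EFinP; exact: measurable_truncated_id.
by move=> x; rewrite lee_fin truncated_id_ge0.
Qed.

Lemma size_biased_scale_gt0 : (0 < c)%R.
Proof. by rewrite lt_def (size_biased_scale_neq0 c_ge0 nu_cdf). Qed.

Lemma size_biased_gt0_ae : {ae P, forall w, 0 < Xs w}%R.
Proof. exact: RV_gt0_ae (size_biased_le0 c_ge0 nu_cdf). Qed.

Lemma expectation_size_biased_pair (k : R -> R -> R) :
    measurable_fun setT (fun z : R * R => k z.1 z.2) ->
    (forall x y, 0 < x -> 0 < y -> 0 <= k x y)%R ->
  'E_P[fun w => k (Xs w) (X w)] =
  \int[mu \x mu]_z (size_bias c z.1 * (k z.1 z.2 * indic_pos2 z))%:E.
Proof.
move=> mk k0.
rewrite (expectation_indep_pos_pair (mY := nu) (mZ := mu)) //;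
  last exact: size_biased_gt0_ae.
rewrite (integral_prod_density mu nu mu (size_bias c) (size_bias_ge0 c_ge0)
  measurable_size_bias (size_biased_integral c_ge0 nu_cdf)) //.
  exact: measurable_indic_pos2_mul.
exact: indic_pos2_mul_ge0.
Qed.

End size_biased_pair.

Section absolute_difference_integral.
Context (R : realType) (m : {sigma_finite_measure set R -> \bar R}).
Variables (c : R) (rho : R -> R) (g : R -> R -> R).
Hypotheses (c_gt0 : (0 < c)%R) (rho_ge0 : forall x, (0 <= rho x)%R)
  (mrho : measurable_fun setT rho) (c_rho : forall x, (0 < x)%R -> (c * rho x)%R = x).
Hypotheses (mg : measurable_fun setT (fun z : R * R => g z.1 z.2))
  (g_ge0 : forall x y, (0 < x)%R -> (0 < y)%R -> (0 <= g x y)%R)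
  (g_sym : forall x y, (0 < x)%R -> (0 < y)%R -> g x y = g y x).

Let G (z : R * R) : R := (g z.1 z.2 * indic_pos2 z)%R.

Let G_ge0 z : (0 <= G z)%R.
Proof.
rewrite /G /indic_pos2.
by case: (ltP 0%R z.1) => x0; case: (ltP 0%R z.2) => y0; rewrite /= ?mulr0 ?mulr1 ?g_ge0.
Qed.

Let G_swap x y : G (y, x) = G (x, y).
Proof.
rewrite /G /indic_pos2 /=.
by case: (ltP 0%R x) => x0; case: (ltP 0%R y) => y0; rewrite /= ?mulr0 // !mulr1 g_sym.
Qed.

Let measurable_G : measurable_fun setT G.
Proof.
apply: measurable_funM => //; apply: measurable_natr_bool.
by apply: measurable_and; apply: measurable_fun_ltr.
Qed.

Let rhoG (b : R -> R -> bool) (z : R * R) : R := (rho z.1 * (G z * (b z.1 z.2)%:R))%R.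

Let rhoG_ge0 b z : (0 <= rhoG b z)%R.
Proof. by rewrite /rhoG mulr_ge0 ?rho_ge0 // mulr_ge0 ?G_ge0. Qed.

Let measurable_rhoG b :
  measurable_fun setT (fun z : R * R => b z.1 z.2) -> measurable_fun setT (rhoG b).
Proof.
move=> mb; apply: measurable_funM; first exact: measurableT_comp.
by apply: measurable_funM => //; exact: measurable_natr_bool.
Qed.

Let integral_rhoG_split :
  \int[m \x m]_z (rho z.1 * G z)%:E =
  \int[m \x m]_z (rhoG (fun x y => y < x)%R z)%:E +
  \int[m \x m]_z (rhoG (fun x y => x < y)%R z)%:E +
  \int[m \x m]_z (rhoG (fun x y => y == x) z)%:E.
Proof.
have mlt := measurable_rhoG (fun x y => y < x)%R
  (measurable_fun_ltr measurable_snd measurable_fst).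
have mgt := measurable_rhoG (fun x y => x < y)%R
  (measurable_fun_ltr measurable_fst measurable_snd).
have meq := measurable_rhoG (fun x y => y == x)
  (measurable_fun_eqr measurable_snd measurable_fst).
rewrite -(ge0_integralD_EFin _ _ _ mlt mgt (rhoG_ge0 _) (rhoG_ge0 _)).
rewrite -(ge0_integralD_EFin _ _ _ (measurable_funD mlt mgt) meq _ (rhoG_ge0 _));
  last first.
  by move=> z; rewrite addr_ge0.
apply: eq_integral => -[x y] _; rewrite /rhoG /= -!mulrDr.
by case: ltgtP => _; rewrite /= ?add0r ?addr0 mulr1.
Qed.

Let integral_absB_rhoG :
  \int[m \x m]_z (`|z.1 - z.2| * G z)%:E +
    (2 * c)%:E * \int[m \x m]_z (rhoG (fun x y => x < y)%R z)%:E =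
  (2 * c)%:E * \int[m \x m]_z (rhoG (fun x y => y < x)%R z)%:E.
Proof.
have mlt := measurable_rhoG (fun x y => y < x)%R
  (measurable_fun_ltr measurable_snd measurable_fst).
have mgt := measurable_rhoG (fun x y => x < y)%R
  (measurable_fun_ltr measurable_fst measurable_snd).
have msym b : measurable_fun setT (rhoG b) ->
    measurable_fun setT (fun z => (rhoG b z + rhoG b (z.2, z.1))%:E).
  move=> mb; apply/measurable_EFinP; apply: measurable_funD => //.
  by apply: measurableT_comp => //; exact: measurable_swap.
have mF := msym _ mgt.
have mH := msym _ mlt.
have sym_ge0 b z : 0 <= (rhoG b z + rhoG b (z.2, z.1))%:E.
  by rewrite lee_fin addr_ge0.
have mL : measurable_fun setT (fun z : R * R => (`|z.1 - z.2| * G z)%:E).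
  apply/measurable_EFinP; apply: measurable_funM => //.
  by apply: measurableT_comp => //; exact: measurable_funB.
rewrite [(2 * c)%R]mulrC !EFinM -!muleA -!integral_prod_add_swap //.
rewrite -!ge0_integralZl_EFin ?(ltW c_gt0) ?msym //.
rewrite -ge0_integralD //; last 3 first.
- by move=> z _; rewrite lee_fin mulr_ge0.
- by move=> z _; rewrite mule_ge0 // lee_fin ltW.
- exact: emeasurable_funM.
apply: eq_integral => -[x y] _; rewrite -!EFinM -EFinD /rhoG /= (G_swap x y); congr EFin.
have [G0|Gneq0] := eqVneq (G (x, y)) 0%R; first by rewrite G0 !(mul0r, mulr0, addr0).
have [x0 y0] : (0 < x)%R /\ (0 < y)%R.
  move: Gneq0; rewrite /G /indic_pos2 /=.
  by case: (ltP 0%R x) => x0; case: (ltP 0%R y) => y0; rewrite ?mulr0 ?eqxx.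
(* on the positive quadrant c rho is the identity, and the claim becomes
   |x - y| + min(x, y) = max(x, y) *)
rewrite !mulrDr !mulrA !c_rho //.
case: (ltgtP x y) => [xy|yx|<-]; rewrite /= ?mulr0 ?mulr1 ?addr0 ?add0r.
- by rewrite ltr0_norm ?subr_lt0 //; ring.
- by rewrite gtr0_norm ?subr_gt0 //; ring.
- by rewrite subrr normr0 !mul0r.
Qed.

Lemma integral_absB_size_biased :
    \int[m \x m]_z (rho z.1 * (g z.1 z.2 * indic_pos2 z))%:E \is a fin_num ->
  \int[m \x m]_z (`|z.1 - z.2| * g z.1 z.2 * indic_pos2 z)%:E =
  (2 * c)%:E *
    (2 * \int[m \x m]_z (rho z.1 * (g z.1 z.2 * (z.2 < z.1)%R%:R * indic_pos2 z))%:E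
     - \int[m \x m]_z (rho z.1 * (g z.1 z.2 * indic_pos2 z))%:E
     + \int[m \x m]_z (rho z.1 * (g z.1 z.2 * (z.2 == z.1)%:R * indic_pos2 z))%:E).
Proof.
move=> Tfin.
rewrite (_ : \int[m \x m]_z (`|_| * _ * _)%:E =
             \int[m \x m]_z (`|z.1 - z.2| * G z)%:E); last first.
  by apply: eq_integral => z _; rewrite -mulrA.
rewrite (_ : \int[m \x m]_z (rho z.1 * (g z.1 z.2 * (z.2 < z.1)%R%:R * _))%:E =
             \int[m \x m]_z (rhoG (fun x y => y < x)%R z)%:E); last first.
  by apply: eq_integral => z _; rewrite /rhoG mulrAC.
rewrite (_ : \int[m \x m]_z (rho z.1 * (g z.1 z.2 * (z.2 == z.1)%:R * _))%:E =
             \int[m \x m]_z (rhoG (fun x y => y == x) z)%:E); last first.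
  by apply: eq_integral => z _; rewrite /rhoG mulrAC.
move: Tfin; rewrite integral_rhoG_split; have := integral_absB_rhoG.
set L := \int[m \x m]_z _; set b := \int[m \x m]_z (rhoG _ z)%:E.
set a := \int[m \x m]_z (rhoG _ z)%:E; set e := \int[m \x m]_z (rhoG _ z)%:E.
move=> hs; rewrite fin_numD => /andP[]; rewrite fin_numD => /andP[fa fb] fe.
have : L + (2 * c)%:E * b \is a fin_num by rewrite hs fin_numM.
rewrite fin_numD => /andP[fL _].
move: hs; rewrite -(fineK fL) -(fineK fa) -(fineK fb) -(fineK fe).
rewrite -!EFinM -EFinD => -[hs].
rewrite -?(EFinM, EFinD, EFinB); congr EFin.
have -> : fine L = (2 * c * fine a - 2 * c * fine b)%R by rewrite -hs addrK.
by ring.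
Qed.

End absolute_difference_integral.

Theorem proposition1 (R : realType) (d : measure_display) (T : measurableType d)
  (P : probability T R) (X X1 X2 Xs : {RV P >-> R}) (g : R -> R -> R)
  (* X is almost surely positive with finite mean *)
  (HXpos : P [set w | (0 < X w)%R] = 1)
  (HXint : P.-integrable setT (EFin \o X))
  (* X1, X2 are independent copies of X *)
  (HX1 : same_law P X1 X) (HX2 : same_law P X2 X) (HX12 : indep2 P X1 X2)
  (* g : positive, symmetric, measurable, integrable *)
  (Hgmeas : measurable_fun setT (fun p : R * R => g p.1 p.2))
  (Hgpos : forall u v : R, (0 < u)%R -> (0 < v)%R -> (0 < g u v)%R)
  (Hgsym : forall u v : R, (0 < u)%R -> (0 < v)%R -> g u v = g v u)
  (Hgint : P.-integrable setT (fun w => (g (Xs w) (X w))%:E))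
  (* X* is independent of X, with cdf u |-> (1/E X) int_0^u t dF(t), u > 0 *)
  (HXsind : indep2 P Xs X)
  (HXscdf : forall u : R, (0 < u)%R ->
     P (Xs @^-1` `]-oo, u]) =
       ((fine 'E_P[X])^-1)%:E *
       'E_P[fun w => (X w * ((0 < X w) && (X w <= u))%:R)%R]) :
  'E_P[fun w => (`|(X1 w - X2 w)| * g (X1 w) (X2 w))%R] =
  (2 * fine 'E_P[X])%R%:E *
   (2 * 'E_P[fun w => (g (Xs w) (X w) * (X w < Xs w)%R%:R)%R]
    - 'E_P[fun w => g (Xs w) (X w)]
    + 'E_P[fun w => (g (Xs w) (X w) * (X w == Xs w)%R%:R)%R])%E.
Proof.
set c := fine 'E_P[X].
have X_le0 := RV_le0_null HXpos.
have X_gt0 := RV_gt0_ae X_le0.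
have X1_gt0 : {ae P, forall w, 0 < X1 w}%R by apply: RV_gt0_ae; rewrite HX1.
have X2_gt0 : {ae P, forall w, 0 < X2 w}%R by apply: RV_gt0_ae; rewrite HX2.
have c_ge0 : (0 <= c)%R.
  by apply/fine_ge0/expectation_ge0_ae; apply: filterS X_gt0 => w /ltW.
have c_gt0 := size_biased_scale_gt0 c_ge0 HXscdf.
have EXs := expectation_size_biased_pair c_ge0 HXsind X_gt0 HXscdf.
have g_ge0 x y : (0 < x)%R -> (0 < y)%R -> (0 <= g x y)%R.
  by move=> x0 y0; exact/ltW/Hgpos.
have gfin : 'E_P[fun w => g (Xs w) (X w)] \is a fin_num.
  by rewrite expectation.unlock; exact: integrable_fin_num.
rewrite (EXs g) // in gfin.
rewrite (expectation_indep_pos_pair (mY := distribution P X) (mZ := distribution P X)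
  HX1 HX2 HX12 (fun x y => `|x - y| * g x y)%R) //; last 2 first.
- apply: measurable_funM => //; apply: measurableT_comp => //; exact: measurable_funB.
- by move=> x y x0 y0; rewrite mulr_ge0 ?g_ge0.
rewrite (EXs g) // (EXs (fun x y => g x y * (y < x)%R%:R)%R); last 2 first.
- by apply: measurable_funM => //; exact/measurable_natr_bool/measurable_fun_ltr.
- by move=> x y x0 y0; rewrite mulr_ge0 ?g_ge0.
rewrite (EXs (fun x y => g x y * (y == x)%:R)%R); last 2 first.
- by apply: measurable_funM => //; exact/measurable_natr_bool/measurable_fun_eqr.
- by move=> x y x0 y0; rewrite mulr_ge0 ?g_ge0.
apply: integral_absB_size_biased => //; first exact: size_bias_ge0.
  exact: measurable_size_bias.
by move=> x; apply: size_bias_mul; rewrite gt_eqF.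
Qed.
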